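(* Let $p$ and $q$ be (not necessarily distinct) primes, let $k=\mathbb{Z}[\zeta_p,\zeta_q]\subseteq\mathbb{C}$ with $\zeta_p,\zeta_q$ primitive $p$-th and $q$-th roots of unity, let $M$ be a $k$-module, $E=\mathrm{End}_{k}(M)$, $\pi=1-\zeta_p$, $\tau=1-\zeta_q$, and let $A\subseteq E$ be a $k$-subalgebra that is both $p$-good and $q$-good. (1) If $s\in A$ is such that $1+\pi\tau s$ is a unit of $A$ generating a subgroup of $A^*$ in which every element has finite order, then $s=0$. (2) If $s,r\in A$ are such that $1+\pi s$ and $1+\tau r$ are units of $A$ and the subgroup of $A^*$ they generate is torsion (every element has finite order), then $1+\pi s$ and $1+\tau r$ commute.
   Context: For a commutative ring $k$, an element $p\in k$ and a $k$-module $M$, a $k$-subalgebra $A\subseteq\mathrm{End}_k(M)$ is called $p$-good if the endomorphism $p(1-ps)$ of $M$ is injective for every $s\in A$. *)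

From HB Require Import structures.
From mathcomp Require Import all_boot all_order all_algebra all_field.
From Stdlib Require Import ClassicalEpsilon.
Set Implicit Arguments. Unset Strict Implicit. Unset Printing Implicit Defensive.
Import Order.TTheory GRing.Theory Num.Theory.
Local Open Scope ring_scope.

(* x lies in Z[a,b] iff x lies in every subring of algC containing a and b. *)
Definition in_Zgen (a b x : algC) : Prop :=
  forall S : {pred algC}, subring_closed S -> a \in S -> b \in S -> x \in S.

Definition Zgen_pred (a b : algC) : pred algC :=
  fun x => if excluded_middle_informative (in_Zgen a b x) then true else false.

Lemma Zgen_predP a b x : reflect (in_Zgen a b x) (x \in Zgen_pred a b).
Proof.
rewrite unfold_in /Zgen_pred.
by case: excluded_middle_informative => H; constructor.
Qed.

Lemma Zgen_closed a b : subring_closed (Zgen_pred a b).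
Proof.
split.
- by apply/Zgen_predP => S [].
- move=> x y /Zgen_predP Hx /Zgen_predP Hy; apply/Zgen_predP => S HS Ha Hb.
  case: (HS) => S1 SB SM; exact: SB (Hx S HS Ha Hb) (Hy S HS Ha Hb).
- move=> x y /Zgen_predP Hx /Zgen_predP Hy; apply/Zgen_predP => S HS Ha Hb.
  case: (HS) => S1 SB SM; exact: SM (Hx S HS Ha Hb) (Hy S HS Ha Hb).
Qed.

Lemma Zgen_gen_l a b : a \in Zgen_pred a b.
Proof. by apply/Zgen_predP => S _ Ha _. Qed.
Lemma Zgen_gen_r a b : b \in Zgen_pred a b.
Proof. by apply/Zgen_predP => S _ _ Hb. Qed.

HB.instance Definition _ (a b : algC) :=
  GRing.isSubringClosed.Build algC (Zgen_pred a b) (Zgen_closed a b).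

Record Zgen (a b : algC) := ZGen { zval : algC; _ : zval \in Zgen_pred a b }.
HB.instance Definition _ a b := [isSub for @zval a b].
HB.instance Definition _ a b := [Choice of Zgen a b by <:].
HB.instance Definition _ a b := [SubChoice_isSubComNzRing of Zgen a b by <:].

Definition zgl (a b : algC) : Zgen a b := ZGen (Zgen_gen_l a b).
Definition zgr (a b : algC) : Zgen a b := ZGen (Zgen_gen_r a b).

(* End_k(M) is modelled by k-linear maps M -> M; multiplication is
   composition, the unit is the identity. *)
Definition k_subalgebra (k : comNzRingType) (M : lmodType k)
  (A : (M -> M) -> Prop) : Prop :=
  [/\ forall f, A f -> linear f,
      A id,
      forall f g, A f -> A g -> A (fun x => f x + g x),
      forall (c : k) f, A f -> A (fun x => c *: f x)
    & forall f g, A f -> A g -> A (f \o g)].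

Definition p_good (k : comNzRingType) (M : lmodType k) (p : k)
  (A : (M -> M) -> Prop) : Prop :=
  forall s, A s -> injective (fun x => p *: (x - p *: s x)).

Definition unit_of (M : Type) (A : (M -> M) -> Prop) (u : M -> M) : Prop :=
  A u /\ exists v, [/\ A v, u \o v = id & v \o u = id].

Inductive gen_grp (M : Type) (G : (M -> M) -> Prop) : (M -> M) -> Prop :=
| gg_one : gen_grp G id
| gg_gen g : G g -> gen_grp G g
| gg_mul f g : gen_grp G f -> gen_grp G g -> gen_grp G (f \o g)
| gg_inv f g : gen_grp G f -> f \o g = id -> g \o f = id -> gen_grp G g.

Definition finite_order (M : Type) (f : M -> M) : Prop :=
  exists n : nat, (0 < n)%N /\ iter n (fun h => f \o h) id = id.

Definition torsion_gen (M : Type) (G : (M -> M) -> Prop) : Prop :=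
  forall f, gen_grp G f -> finite_order f.

From HB Require Import structures.
From mathcomp Require Import all_boot all_order all_algebra all_field.
From mathcomp Require Import ring.
From Stdlib Require Import FunctionalExtensionality.
Set Implicit Arguments. Unset Strict Implicit. Unset Printing Implicit Defensive.
Import GRing.Theory.
Local Open Scope ring_scope.

(* Everything happens inside the commutative subalgebra generated by one element w
   of A, through the evaluation P |-> P(w) of polynomials over k.  With pi = 1 - zeta_p
   one has pi | p and p | pi^(p-1), so p-goodness makes every 1 - pi W injective: it
   divides 1 - pi^p W^p, which lies in 1 - p k[w].  Writing (1 + x)^n = 1 + x S_n(x),
   a unipotent 1 + x of order dividing n is trivial as soon as S_n(x) is injective:
   for x in pi k[w] and n prime to p, Bezout gives c S_n(x) = 1 - pi W; for x in
   pi^2 k[w] and n = p, S_p(x) = p (1 + pi T).  If 1 + pi tau s has order p^a m, this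
   first kills its p^a-th power, and then the element itself, by q-goodness when p <> q
   and because pi^2 | pi tau when p = q.  For part (2), the commutator of 1 + pi s and
   1 + tau r is again of the form 1 + pi tau t with t in A. *)

Section CommRing.
Variable R : comNzRingType.

Definition binom_quot (x : R) n := \sum_(i < n) x ^+ i *+ 'C(n, i.+1).

Lemma exp1D_binom_quot (x : R) n : (1 + x) ^+ n = 1 + x * binom_quot x n.
Proof.
rewrite addrC exprD1n big_ord_recl /= expr0 bin0 mulr1n mulr_sumr.
by congr (_ + _); apply: eq_bigr => i _; rewrite mulrnAr -exprS.
Qed.

Lemma binom_quot_mod (pi y : R) n :
  exists T, binom_quot (pi * y) n = n%:R + pi * T.
Proof.
case: n => [|n]; first by exists 0; rewrite /binom_quot big_ord0 mulr0 addr0.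
exists (y * \sum_(i < n) (pi * y) ^+ i *+ 'C(n.+1, i.+2)).
rewrite /binom_quot big_ord_recl expr0 bin1 mulrA !mulr_sumr; congr (_ + _).
by apply: eq_bigr => i _; rewrite mulrnAr -exprS.
Qed.

Lemma binom_quot_prime (p : nat) (pi h y : R) :
  prime p -> pi ^+ p.-1 = p%:R * h ->
  exists T, binom_quot (pi * pi * y) p = p%:R * (1 + pi * T).
Proof.
move=> p_pr pih; set x := pi * pi * y.
have [n defp] : exists n, p = n.+2 by case: p p_pr {pih} => [|[|n]] //; exists n.
subst p; suff [T HT] : exists T,
    \sum_(i < n.+1) x ^+ i.+1 *+ 'C(n.+2, i.+2) = n.+2%:R * (pi * T).
  by exists T; rewrite /binom_quot big_ord_recl expr0 bin1 HT mulrDr mulr1.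
apply: (big_ind (fun a => exists T, a = n.+2%:R * (pi * T))).
- by exists 0; rewrite !mulr0.
- by move=> _ _ [T1 ->] [T2 ->]; exists (T1 + T2); rewrite !mulrDr.
move=> [i /= ilt] _; rewrite exprS.
have [i_lt | i_ge] := ltnP i n.
  have /dvdnP [b ->] : (n.+2 %| 'C(n.+2, i.+2))%N by apply: prime_dvd_bin.
  by exists (b%:R * (pi * y) * x ^+ i); rewrite -mulr_natr natrM /x; ring.
have -> : i = n by apply/eqP; rewrite eqn_leq i_ge -ltnS ilt.
exists (h * pi ^+ n * y ^+ n.+1).
by rewrite binn mulr1n -exprS /x !exprMn {1}pih exprS; ring.
Qed.

Lemma coprime_bezout_mod (m p : nat) (pi d T : R) :
  (0 < m)%N -> coprime m p -> p%:R = pi * d ->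
  exists c W, c * (m%:R + pi * T) = 1 - pi * W.
Proof.
move=> m_gt0 cop pid; have [km kn def _] := egcdnP p m_gt0.
exists km%:R, (- (kn%:R * d + km%:R * T)).
have : (km * m)%:R = kn%:R * p%:R + 1 :> R by rewrite def (eqP cop) natrD natrM.
by rewrite natrM pid => E; rewrite mulrDr E; ring.
Qed.

Lemma one_sub_expr_dvd (z : R) j : exists e, 1 - z ^+ j = (1 - z) * e.
Proof. by exists (\sum_(l < j) z ^+ l); rewrite -opprB subrX1 -mulNr opprB. Qed.

End CommRing.

Section LinearFun.
Variables (k : comNzRingType) (M : lmodType k) (f : M -> M).
Hypothesis f_lin : linear f.

Lemma lin_fun0 : f 0 = 0.
Proof.
have := f_lin 1 0 0; rewrite !scale1r addr0 => /(congr1 (fun v => v - f 0)).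
by rewrite subrr addrK.
Qed.

Lemma lin_funD x y : f (x + y) = f x + f y.
Proof. by have := f_lin 1 x y; rewrite !scale1r. Qed.

Lemma lin_funZ a x : f (a *: x) = a *: f x.
Proof. by have := f_lin a x 0; rewrite !addr0 lin_fun0 addr0. Qed.

Lemma lin_fun_sum n (F : 'I_n -> M) : f (\sum_(i < n) F i) = \sum_(i < n) f (F i).
Proof. exact: (big_morph f lin_funD lin_fun0). Qed.

End LinearFun.

Section PolyEval.
Variables (k : comNzRingType) (M : lmodType k) (w : M -> M).

(* P(w), built by hand since End_k(M) carries no ring structure here *)
Definition peval (P : {poly k}) : M -> M :=
  fun z => \sum_(i < size P) P`_i *: iter i w z.

Lemma peval_widen (P : {poly k}) n z :
  (size P <= n)%N -> peval P z = \sum_(i < n) P`_i *: iter i w z.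
Proof.
move=> Pn; rewrite /peval (big_ord_widen _ (fun i => P`_i *: iter i w z) Pn).
rewrite big_mkcond; apply: eq_bigr => i _; case: ltnP => // Pi.
by rewrite nth_default // scale0r.
Qed.

Lemma peval0 z : peval 0 z = 0.
Proof. by rewrite /peval size_poly0 big_ord0. Qed.

Lemma pevalD P Q z : peval (P + Q) z = peval P z + peval Q z.
Proof.
pose n := maxn (size P) (size Q).
rewrite (@peval_widen (P + Q) n) ?(leq_trans (size_polyD _ _)) //.
rewrite (@peval_widen P n) ?leq_maxl // (@peval_widen Q n) ?leq_maxr //.
by rewrite -big_split; apply: eq_bigr => i _; rewrite coefD scalerDl.
Qed.

Lemma pevalCM c P z : peval (c%:P * P) z = c *: peval P z.
Proof.
rewrite (@peval_widen _ (size P)) ?mul_polyC ?size_scale_leq //.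
by rewrite scaler_sumr; apply: eq_bigr => i _; rewrite coefZ scalerA.
Qed.

Lemma pevalMX P z : peval (P * 'X) z = peval P (w z).
Proof.
rewrite (@peval_widen _ (size P).+1); last first.
  by have [->|P0] := eqVneq P 0; rewrite ?mul0r ?size_poly0 ?size_mulX.
rewrite big_ord_recl coefMX /= scale0r add0r.
by apply: eq_bigr => i _; rewrite coefMX /= -iterS iterSr.
Qed.

Lemma peval1 z : peval 1 z = z.
Proof. by rewrite /peval size_poly1 big_ord1 coefC /= scale1r. Qed.

Lemma pevalC c z : peval c%:P z = c *: z.
Proof. by rewrite -[c%:P]mulr1 pevalCM peval1. Qed.

Lemma pevalX z : peval 'X z = w z.
Proof. by rewrite -['X]mul1r pevalMX peval1. Qed.

Lemma peval1DCM c P z : peval (1 + c%:P * P) z = z + c *: peval P z.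
Proof. by rewrite pevalD peval1 pevalCM. Qed.

Lemma peval1BCM c P z : peval (1 - c%:P * P) z = z - c *: peval P z.
Proof. by rewrite -mulNr -polyCN peval1DCM scaleNr. Qed.

Hypothesis w_lin : linear w.

Lemma peval_comm P z : w (peval P z) = peval P (w z).
Proof.
rewrite /peval lin_fun_sum //; apply: eq_bigr => i _.
by rewrite lin_funZ // -iterS iterSr.
Qed.

Lemma pevalM (P Q : {poly k}) z : peval (P * Q) z = peval P (peval Q z).
Proof.
elim/poly_ind: P z => [|P c IH] z; first by rewrite mul0r !peval0.
rewrite mulrDl mulrAC !pevalD (pevalMX (P * Q)) IH pevalCM pevalC pevalMX.
by rewrite peval_comm.
Qed.

Lemma iter_comp_peval U n z :
  iter n (fun h => peval U \o h) id z = peval (U ^+ n) z.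
Proof. by elim: n z => [|n IH] z /=; rewrite ?expr0 ?peval1 // exprS pevalM IH. Qed.

End PolyEval.

Section Subalgebra.
Variables (k : comNzRingType) (M : lmodType k) (A : (M -> M) -> Prop).
Hypothesis HA : k_subalgebra A.

Lemma sub_lin f : A f -> linear f. Proof. by case: HA => H _ _ _ _; apply: H. Qed.
Lemma sub_id : A id. Proof. by case: HA. Qed.
Lemma subD f g : A f -> A g -> A (fun x => f x + g x).
Proof. by case: HA => _ _ H _ _; apply: H. Qed.
Lemma subZ c f : A f -> A (fun x => c *: f x).
Proof. by case: HA => _ _ _ H _; apply: H. Qed.
Lemma sub_comp f g : A f -> A g -> A (f \o g).
Proof. by case: HA => _ _ _ _ H; apply: H. Qed.

Lemma subB f g : A f -> A g -> A (fun x => f x - g x).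
Proof.
move=> Af Ag; have := subD Af (subZ (-1) Ag); congr A.
by apply: functional_extensionality => x; rewrite scaleN1r.
Qed.

Lemma sub_peval w P : A w -> A (peval w P).
Proof.
move=> Aw; rewrite /peval; elim: (size P) => [|n IH].
  have := subZ 0 sub_id; congr A; apply: functional_extensionality => x.
  by rewrite big_ord0 scale0r.
have Aiter : A (iter n w) by elim: n {IH} => [|n IHn]; [exact: sub_id | exact: sub_comp].
have := subD IH (subZ P`_n Aiter); congr A.
by apply: functional_extensionality => x; rewrite big_ord_recr.
Qed.

End Subalgebra.

(* What remains in k of p = unit * (1 - zeta_p)^(p-1). *)
Definition ramified_at (R : comNzRingType) (p : nat) (pi : R) :=
  (exists d, p%:R = pi * d) /\ (exists h, pi ^+ p.-1 = p%:R * h).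

Section Unipotent.
Variables (k : comNzRingType) (M : lmodType k) (A : (M -> M) -> Prop).
Hypothesis HA : k_subalgebra A.
Variables (w : M -> M).
Hypothesis Aw : A w.

Let w_lin := sub_lin HA Aw.

Lemma peval_inj_mulr (P Q : {poly k}) :
  injective (peval w (P * Q)) -> injective (peval w Q).
Proof. by move=> PQ_inj a b ab; apply: PQ_inj; rewrite !pevalM // ab. Qed.

Lemma peval_fixed_binom_quot (x : {poly k}) n :
  peval w ((1 + x) ^+ n) =1 id -> injective (peval w (binom_quot x n)) ->
  peval w (1 + x) =1 id.
Proof.
move=> fix_n S_inj z; rewrite pevalD peval1; have := fix_n z.
rewrite exp1D_binom_quot pevalD peval1 mulrC pevalM // => /(canRL (addKr z)).
rewrite addNr -(lin_fun0 (sub_lin HA (sub_peval HA (binom_quot x n) Aw))).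
by move=> /S_inj ->; rewrite addr0.
Qed.

Section PrimeUniformizer.
Variables (p : nat) (pi : k).
Hypotheses (p_pr : prime p) (pi_ram : ramified_at p pi) (goodA : p_good p%:R A).

Lemma good_scale_inj : injective (fun z : M => p%:R *: z).
Proof.
move=> a b ab; apply: (goodA (subZ HA 0 (sub_id HA))).
by rewrite /= !scale0r !scaler0 !subr0.
Qed.

Lemma scale_pi_eq0 (z : M) : pi *: z = 0 -> z = 0.
Proof.
case: pi_ram => [[d pid] _] piz; apply: good_scale_inj.
by rewrite /= pid mulrC -scalerA piz !scaler0.
Qed.

Lemma peval_inj_one_sub (W : {poly k}) : injective (peval w (1 - pi%:P * W)).
Proof.
case: pi_ram => _ [h pih]; set x := pi%:P * W.
have pip : pi ^+ p = p%:R * (h * pi).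
  by rewrite -[in LHS](prednK (prime_gt0 p_pr)) exprSr pih mulrA.
have geomE : (\sum_(i < p) x ^+ i) * (1 - x) = 1 - p%:R%:P * ((h * pi)%:P * W ^+ p).
  by rewrite mulrC -[1 - x]opprB mulNr -subrX1 opprB exprMn -polyC_exp pip polyCM mulrA.
apply: (@peval_inj_mulr (\sum_(i < p) x ^+ i)); rewrite geomE => a b.
rewrite !peval1BCM => ab; apply: (goodA (sub_peval HA ((h * pi)%:P * W ^+ p) Aw)).
by rewrite /= ab.
Qed.

Lemma unipotent_coprime (U Y : {poly k}) m :
  U = 1 + pi%:P * Y -> (0 < m)%N -> coprime m p ->
  peval w (U ^+ m) =1 id -> peval w U =1 id.
Proof.
move=> -> m_gt0 cop fix_m; apply: peval_fixed_binom_quot fix_m _.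
case: pi_ram => [[d pid] _]; have [T ->] := binom_quot_mod pi%:P Y m.
have pidP : p%:R = pi%:P * d%:P by rewrite -polyCM -pid polyC_natr.
have [c [W cE]] := coprime_bezout_mod T m_gt0 cop pidP.
by apply: (@peval_inj_mulr c); rewrite cE; apply: peval_inj_one_sub.
Qed.

Lemma unipotent_prime (U Y : {poly k}) :
  U = 1 + pi%:P * pi%:P * Y -> peval w (U ^+ p) =1 id -> peval w U =1 id.
Proof.
move=> -> fix_p; apply: peval_fixed_binom_quot fix_p _.
case: pi_ram => _ [h pih].
have pihP : pi%:P ^+ p.-1 = p%:R * h%:P by rewrite -polyC_exp pih polyCM polyC_natr.
have [T ->] := binom_quot_prime Y p_pr pihP.
rewrite -polyC_natr -[T]opprK mulrN => a b.
rewrite !pevalCM => /good_scale_inj; exact: peval_inj_one_sub.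
Qed.

Lemma unipotent_prime_power (U Y : {poly k}) a :
  U = 1 + pi%:P * pi%:P * Y -> peval w (U ^+ (p ^ a)) =1 id -> peval w U =1 id.
Proof.
elim: a U Y => [|a IH] U Y UE; first by rewrite expn0 expr1.
rewrite expnS exprM => fix_pa; apply: (unipotent_prime UE).
apply: (IH _ (Y * binom_quot (pi%:P * pi%:P * Y) p)) fix_pa.
by rewrite UE exp1D_binom_quot mulrA.
Qed.

End PrimeUniformizer.

End Unipotent.

Section TwoPrimes.
Variables (k : comNzRingType) (M : lmodType k) (A : (M -> M) -> Prop).
Variables (p q : nat) (pi tau : k).
Hypotheses (HA : k_subalgebra A) (p_pr : prime p) (q_pr : prime q).
Hypotheses (pi_ram : ramified_at p pi) (tau_ram : ramified_at q tau).
Hypotheses (goodAp : p_good p%:R A) (goodAq : p_good q%:R A).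
(* For p = q, q-goodness cannot remove the p-part of the order; pi^2 | pi tau does. *)
Hypothesis pi_dvd_tau : p = q -> exists e, tau = pi * e.

Lemma finite_order_one_add_scale t :
  A t -> finite_order (fun x => x + (pi * tau) *: t x) -> t = (fun _ => 0).
Proof.
move=> At [n [n_gt0 fix_n]]; set U := 1 + (pi * tau)%:P * 'X.
have UE : (fun x => x + (pi * tau) *: t x) = peval t U.
  by apply: functional_extensionality => x; rewrite peval1DCM pevalX.
have fix_Un : peval t (U ^+ n) =1 id.
  by move=> z; rewrite -(iter_comp_peval (sub_lin HA At)) -UE fix_n.
have [m cop_pm n_eq] := pfactor_coprime p_pr n_gt0; set a := logn p n in n_eq.
have fix_Upa : peval t (U ^+ (p ^ a)) =1 id.
  set S := binom_quot ((pi * tau)%:P * 'X) (p ^ a).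
  apply: (unipotent_coprime HA At p_pr pi_ram goodAp (Y := tau%:P * 'X * S) (m := m)).
  - by rewrite exp1D_binom_quot -/S polyCM !mulrA.
  - by move: n_gt0; rewrite n_eq muln_gt0 => /andP[].
  - by rewrite coprime_sym.
  by rewrite -exprM mulnC -n_eq.
have fix_U : peval t U =1 id.
  have [pq | npq] := eqVneq p q.
    have [e tauE] := pi_dvd_tau pq.
    apply: (unipotent_prime_power HA At p_pr pi_ram goodAp (Y := e%:P * 'X) _ fix_Upa).
    by rewrite /U tauE !polyCM !mulrA.
  apply: (unipotent_coprime HA At q_pr tau_ram goodAq (Y := pi%:P * 'X) _ _ _ fix_Upa).
  - by rewrite /U polyCM mulrA (mulrC tau%:P).
  - by rewrite expn_gt0 prime_gt0.
  by rewrite coprimeXl // prime_coprime // dvdn_prime2 // npq.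
apply: functional_extensionality => z; apply: (scale_pi_eq0 HA tau_ram goodAq).
apply: (scale_pi_eq0 HA pi_ram goodAp); rewrite scalerA.
by have := fix_U z; rewrite -UE => /(canRL (addKr z)) ->; rewrite addNr.
Qed.

End TwoPrimes.

Lemma comm_one_add_scale (k : comNzRingType) (M : lmodType k) (A : (M -> M) -> Prop)
    (a b : k) (s r u' v' : M -> M) :
  k_subalgebra A -> A s -> A r -> A u' -> A v' ->
  (fun x => x + a *: s x) \o u' = id -> (fun x => x + b *: r x) \o v' = id ->
  exists2 t, A t & ((fun x => x + a *: s x) \o (fun x => x + b *: r x)) \o (u' \o v')
                   = (fun x => x + (a * b) *: t x).
Proof.
move=> HA As Ar Au' Av' uu' vv'; set u := fun x => _ in uu' *; set v := fun x => _ in vv' *.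
exists (fun x => s (r (u' (v' x))) - r (s (u' (v' x)))).
  have Auv := sub_comp HA Au' Av'.
  exact: (subB HA (sub_comp HA As (sub_comp HA Ar Auv)) (sub_comp HA Ar (sub_comp HA As Auv))).
have uvE y : u (v y) = v (u y) + (a * b) *: (s (r y) - r (s y)).
  have [s_lin r_lin] := (sub_lin HA As, sub_lin HA Ar).
  rewrite /u /v (lin_funD s_lin) (lin_funD r_lin) (lin_funZ s_lin) (lin_funZ r_lin).
  rewrite scalerBr !scalerDr !scalerA (mulrC b) -!addrA; congr (_ + _).
  by rewrite [_ *: r (s y) + _]addrCA subrr addr0 addrCA.
apply: functional_extensionality => x /=; rewrite uvE.
have -> : u (u' (v' x)) = v' x by exact: (congr1 (fun f => f (v' x)) uu').
by have -> : v (v' x) = x by exact: (congr1 (fun f => f x) vv').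
Qed.

Lemma prod_one_sub_prim_root (F : fieldType) n (z : F) :
  (0 < n)%N -> n.-primitive_root z -> \prod_(1 <= i < n) (1 - z ^+ i) = n%:R.
Proof.
move=> n_gt0 prim_z; have := factor_Xn_sub_1 prim_z.
rewrite big_ltn // expr0 polyC1 subrX1 => /mulfI.
rewrite -polyC1 polyXsubC_eq0 => /(_ isT) /(congr1 (horner^~ 1)).
rewrite horner_prod horner_sum; under eq_bigr do rewrite hornerXsubC.
by under [in X in _ = X -> _]eq_bigr do rewrite hornerXn expr1n; rewrite sumr_const card_ord.
Qed.

Section CyclotomicUniformizer.
Variables (a b : algC) (p : nat) (zeta : Zgen a b).
Hypotheses (p_pr : prime p) (prim_zeta : p.-primitive_root (zval zeta)).

Lemma prod_one_sub_zeta : \prod_(1 <= i < p) (1 - zeta ^+ i) = p%:R.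
Proof.
apply: val_inj; rewrite rmorph_prod rmorph_nat -(prod_one_sub_prim_root (prime_gt0 p_pr) prim_zeta).
by apply: eq_bigr => i _; rewrite rmorphB rmorph1 rmorphXn.
Qed.

Lemma zeta_power_of_expr i : (0 < i < p)%N -> exists t, (zeta ^+ i) ^+ t = zeta.
Proof.
case/andP=> i_gt0 i_lt; have cop : coprime i p by rewrite coprime_sym prime_coprime // gtnNdvd.
have prim_i : p.-primitive_root (zval zeta ^+ i) by rewrite prim_root_exp_coprime.
have [t zetaE] := prim_rootP prim_i (prim_expr_order prim_zeta).
by exists t; apply: val_inj; rewrite !rmorphXn /= -zetaE.
Qed.

Lemma ramified_at_one_sub_zeta : ramified_at p (1 - zeta).
Proof.
split.
  exists (\prod_(2 <= i < p) (1 - zeta ^+ i)).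
  by rewrite -prod_one_sub_zeta big_ltn ?prime_gt1 // expr1.
rewrite -subn1 -prodr_const_nat -prod_one_sub_zeta.
rewrite (big_nat_cond _ _ _ _ _ (fun i => 1 - zeta)).
rewrite (big_nat_cond _ _ _ _ _ (fun i => 1 - zeta ^+ i)).
apply: (big_ind2 (fun X Y => exists G, X = Y * G)).
- by exists 1; rewrite mulr1.
- by move=> x1 x2 y1 y2 [G1 ->] [G2 ->]; exists (G1 * G2); ring.
move=> i; rewrite andbT => i_range; have [t zetaE] := zeta_power_of_expr i_range.
by rewrite -{1}zetaE; apply: one_sub_expr_dvd.
Qed.

End CyclotomicUniformizer.

Theorem mainTheorem19 (p q : nat) (zp zq : algC)
  (Hp : prime p) (Hq : prime q)
  (Hzp : p.-primitive_root zp) (Hzq : q.-primitive_root zq)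
  (M : lmodType (Zgen zp zq)) (A : (M -> M) -> Prop)
  (HA : k_subalgebra A)
  (HAp : p_good p%:R A) (HAq : p_good q%:R A) :
  let pi : Zgen zp zq := 1 - zgl zp zq in
  let tau : Zgen zp zq := 1 - zgr zp zq in
  (forall s, A s ->
     let u := fun x => x + (pi * tau) *: s x in
     unit_of A u -> torsion_gen (fun g => g = u) ->
     s = (fun _ => 0))
  /\
  (forall s r, A s -> A r ->
     let u := fun x => x + pi *: s x in
     let v := fun x => x + tau *: r x in
     unit_of A u -> unit_of A v ->
     torsion_gen (fun g => g = u \/ g = v) ->
     u \o v = v \o u).
Proof.
move=> pi tau.
have pi_dvd_tau : p = q -> exists e, tau = pi * e.
  move=> pq; subst q; have [j zqE] := prim_rootP Hzp (prim_expr_order Hzq).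
  have -> : tau = 1 - zgl zp zq ^+ j by congr (_ - _); apply: val_inj; rewrite rmorphXn.
  exact: one_sub_expr_dvd.
have pi_ram := ramified_at_one_sub_zeta (zeta := zgl zp zq) Hp Hzp.
have tau_ram := ramified_at_one_sub_zeta (zeta := zgr zp zq) Hq Hzq.
have unipotent_eq0 :=
  finite_order_one_add_scale HA Hp Hq pi_ram tau_ram HAp HAq pi_dvd_tau.
split=> [s As u _ tors | s r As Ar u v [_ [u' [Au' uu' u'u]]] [_ [v' [Av' vv' v'v]]] tors].
  exact: unipotent_eq0 As (tors u (gg_gen (erefl u))).
have [t At commE] := comm_one_add_scale HA As Ar Au' Av' uu' vv'.
have comm_fo : finite_order ((u \o v) \o (u' \o v')).
  apply: tors; apply: gg_mul; apply: gg_mul.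
  - by apply: gg_gen; left.
  - by apply: gg_gen; right.
  - exact: gg_inv (gg_gen (or_introl erefl)) uu' u'u.
  exact: gg_inv (gg_gen (or_intror erefl)) vv' v'v.
move: comm_fo; rewrite commE => /(unipotent_eq0 _ At) t0.
apply: functional_extensionality => x; have := congr1 (fun f => f (v (u x))) commE.
rewrite /= t0 scaler0 addr0 => <-.
have -> : v' (v (u x)) = u x by exact: (congr1 (fun f => f (u x)) v'v).
by have -> : u' (u x) = x by exact: (congr1 (fun f => f x) u'u).
Qed.
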